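(* Let $1\le k\le n-1$ and identify $H^*(G_{2k}(\mathbb R^{2n}))$ with the $(+1)$-eigenspace of $\rho^*$ on $H^*(\tilde G_{2k}(\mathbb R^{2n}))$ via $\pi^*$. Write $A=\mathrm{Span}\{p_1^{r_1}\cdots p_k^{r_k}:\sum_{i=1}^kr_i\le n-k-1\}$, $B=\mathrm{Span}\{\bar p_1^{r_1}\cdots\bar p_{n-k}^{r_{n-k}}:\sum_{i=1}^{n-k}r_i\le k-1\}$. Then: (1) multiplication by $e$ is a linear isomorphism $A\to e\cdot A$, and multiplication by $\bar e$ is a linear isomorphism $B\to\bar e\cdot B$; (2) $e\cdot A\oplus\bar e\cdot B$ (a direct sum) is the $(-1)$-eigenspace of $\rho^*$; (3) $e\cdot H^*(G_{2k}(\mathbb R^{2n}))\cap\bar e\cdot H^*(G_{2k}(\mathbb R^{2n}))=0$ and $e\cdot H^*(G_{2k}(\mathbb R^{2n}))\oplus\bar e\cdot H^*(G_{2k}(\mathbb R^{2n}))$ is the $(-1)$-eigenspace of $\rho^*$; (4) the kernel of multiplication by $e$ on $H^*(G_{2k}(\mathbb R^{2n}))$ is $\bar p_{n-k}\cdot B$, and the kernel of multiplication by $\bar e$ is $p_k\cdot A$; (5) $e\cdot A=e\cdot\mathrm{Span}\{\bar p_1^{r_1}\cdots\bar p_{n-k-1}^{r_{n-k-1}}:\sum r_i\le k\}=e\cdot H^*(G_{2k}(\mathbb R^{2n}))$ and $\bar e\cdot B=\bar e\cdot\mathrm{Span}\{p_1^{r_1}\cdots p_{k-1}^{r_{k-1}}:\sum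 r_i\le n-k\}=\bar e\cdot H^*(G_{2k}(\mathbb R^{2n}))$.
   Context: All cohomology has $\mathbb Q$ coefficients. $\tilde G_{2k}(\mathbb R^{2n})$ is the Grassmannian of oriented $2k$-planes in $\mathbb R^{2n}$, $G_{2k}(\mathbb R^{2n})$ the Grassmannian of $2k$-planes, $\pi$ the double cover forgetting orientation, and $\rho$ the orientation-reversing deck involution; $\pi^*$ is injective with image the $(+1)$-eigenspace of $\rho^*$. $p_i$ ($1\le i\le k$) and $\bar p_i$ ($1\le i\le n-k$) are the Pontryagin classes of the tautological bundle $\gamma$ and the complementary bundle $\bar\gamma$ (fibre $V^\perp$), pulled back to $\tilde G_{2k}(\mathbb R^{2n})$ where relevant; $e$ and $\bar e$ are the Euler classes of the oriented tautological and complementary bundles on $\tilde G_{2k}(\mathbb R^{2n})$ (with $V\oplus V^\perp$ oriented as $\mathbb R^{2n}$). Known relations: $(1+p_1+\dots+p_k)(1+\bar p_1+\dots+\bar p_{n-k})=1$, $e^2=p_k$, $\bar e^2=\bar p_{n-k}$, $e\bar e=0$; the monomials $p_1^{r_1}\cdots p_k^{r_k}$ with $\sum r_i\le n-k$ form a basis of $H^*(G_{2k}(\mathbb R^{2n}))$, as do $\bar p_1^{r_1}\cdots\bar p_{n-k}^{r_{n-k}}$ with $\sum r_i\le k$; total Betti numbers are $\binom nk$ for $G_{2k}(\mathbb R^{2n})$ and $2\binom nk$ for $\tilde G_{2k}(\mathbb R^{2n})$. *)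

(* Abstract (axiomatic) model of H^*(~G_{2k}(R^{2n}); Q). *)
From HB Require Import structures.
From mathcomp Require Import all_boot all_order all_algebra all_field.
Set Implicit Arguments. Unset Strict Implicit. Unset Printing Implicit Defensive.
Import Order.TTheory GRing.Theory Num.Theory.
Local Open Scope ring_scope.

(* monomial p_1^{r_1} ... p_m^{r_m}, the classes being indexed from 1: p 1, ..., p m *)
Definition pmono (L : falgType rat) (m d : nat) (p : nat -> L)
  (r : {ffun 'I_m -> 'I_d.+1}) : L :=
  \prod_(i < m) p i.+1 ^+ (r i : nat).

Definition monos (L : falgType rat) (m d : nat) (p : nat -> L) : seq L :=
  [seq pmono p r | r in [pred r : {ffun 'I_m -> 'I_d.+1} | (\sum_(i < m) (r i : nat) <= d)%N]].

Definition monoSpan (L : falgType rat) (m d : nat) (p : nat -> L) : {vspace L} :=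
  (<<monos m d p>>)%VS.

Definition mulSp (L : falgType rat) (x : L) (U : {vspace L}) : {vspace L} :=
  (amull x @: U)%VS.

Definition eigP (L : falgType rat) (rho : 'End(L)) : {vspace L} := lker (rho - \1)%VF.
Definition eigN (L : falgType rat) (rho : 'End(L)) : {vspace L} := lker (rho + \1)%VF.

(* Write k = a + 1 and n - k = b + 1. On the rho-invariant part H, which has
   the p-monomials of degree <= n - k as a basis, multiplication by the top class
   p_k = e^2 maps the monomials of degree < n - k injectively onto other basis
   monomials, so e is injective on their span A; likewise ebar on B.
   Since e ebar = 0, the images e A and ebar B meet trivially; both lie in the
   anti-invariant part N, and dim A + dim B = C(n, k) = dim H >= dim N, so
   e A (+) ebar B = N. As pbar_(n-k) B = ebar (ebar B) lies in the kernel of e on H,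
   counting dimensions shows that it is the whole kernel and that e H = e A.
   Finally the pbar-monomials avoiding pbar_(n-k) span a subspace of H of
   dimension dim A meeting pbar_(n-k) B trivially, so it too is mapped onto e H. *)

From HB Require Import structures.
From mathcomp Require Import all_boot all_order all_algebra all_field zify.
Set Implicit Arguments. Unset Strict Implicit. Unset Printing Implicit Defensive.
Import GRing.Theory Num.Theory.

Definition expvecs m d : pred {ffun 'I_m -> 'I_d.+1} :=
  [pred r : {ffun 'I_m -> 'I_d.+1} | (\sum_(i < m) (r i : nat) <= d)%N].
Arguments expvecs : clear implicits.

Lemma card_expvecs m d : #|expvecs m d| = 'C(m + d, m).
Proof.
rewrite -card_partial_ord_partitions -sum1dep_card -sum1_card.
pose of_tuple (t : m.-tuple 'I_d.+1) : {ffun 'I_m -> 'I_d.+1} := [ffun i => tnth t i].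
rewrite (reindex of_tuple) /=; last first.
  exists (fun r => [tuple r i | i < m]) => [t _ | r _].
    by apply: eq_from_tnth => i; rewrite tnth_mktuple ffunE.
  by apply/ffunP => i; rewrite ffunE tnth_mktuple.
apply: eq_bigl => t; rewrite inE big_tuple.
by congr (_ <= _)%N; apply: eq_bigr => i _; rewrite ffunE.
Qed.

Lemma size_monos (L : falgType rat) m d (p : nat -> L) :
  size (monos m d p) = 'C(m + d, m).
Proof. by rewrite size_image card_expvecs. Qed.

Lemma bin_sym x y : 'C(x + y, x) = 'C(x + y, y).
Proof. by rewrite -{3}(addKn x y) bin_sub ?leq_addr. Qed.

Lemma bin_splitS a b : ('C(a.+1 + b, a.+1) + 'C(b.+1 + a, b.+1) = 'C(a.+1 + b.+1, a.+1))%N.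
Proof. by rewrite addnS binS addSnnS [b.+1 + a]addnC bin_sym. Qed.

Local Open Scope ring_scope.

Lemma dim_monoSpan (L : falgType rat) m d (p : nat -> L) :
  free (monos m d p) -> \dim (monoSpan m d p) = 'C(m + d, m).
Proof. by move/eqP->; rewrite size_monos. Qed.

Lemma dim_basis_monos (L : falgType rat) m d (p : nat -> L) (U : {vspace L}) :
  basis_of U (monos m d p) -> \dim U = 'C(m + d, m).
Proof. by move=> bU; rewrite -(span_basis bU) dim_monoSpan ?(basis_free bU). Qed.

Lemma sub_free (K : fieldType) (vT : vectType K) (X Y : seq vT) :
  uniq Y -> {subset Y <= X} -> free X -> free Y.
Proof.
move=> uY sYX fX; have uX := free_uniq fX.
rewrite (@perm_free _ _ _ [seq x <- X | x \in Y]); first exact: filter_free.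
apply: uniq_perm => // [|x]; first exact: filter_uniq.
by rewrite mem_filter; case Yx: (x \in Y); rewrite // sYX.
Qed.

Lemma sub_free_span_cap0 (K : fieldType) (vT : vectType K) (X Y Z : seq vT) :
  uniq (Y ++ Z) -> {subset Y ++ Z <= X} -> free X -> (<<Y>> :&: <<Z>> = 0)%VS.
Proof.
by move=> uYZ sYZX /(sub_free uYZ sYZX); rewrite cat_free => /and3P[_ _ /directv_addP].
Qed.

Section MonomialImage.

Variables (L : falgType rat) (p : nat -> L) (m d m' d' : nat) (f : L -> L).
Variable g : {ffun 'I_m' -> 'I_d'.+1} -> {ffun 'I_m -> 'I_d.+1}.
Hypothesis g_inj : {in expvecs m' d' &, injective g}.
Hypothesis g_expvecs : {in expvecs m' d', forall r, g r \in expvecs m d}.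
Hypothesis pmono_g : {in expvecs m' d', forall r, pmono p (g r) = f (pmono p r)}.

Lemma map_monos : map f (monos m' d' p) = [seq pmono p (g r) | r in expvecs m' d'].
Proof.
rewrite /monos /image_mem -map_comp; apply/eq_in_map => r.
by rewrite mem_enum => /pmono_g.
Qed.

Lemma map_monos_sub : {subset map f (monos m' d' p) <= monos m d p}.
Proof.
by move=> x; rewrite map_monos => /mapP[r]; rewrite mem_enum => /g_expvecs/(image_f _) + ->.
Qed.

Hypothesis free_monos : free (monos m d p).

Lemma map_monos_uniq : uniq (map f (monos m' d' p)).
Proof.
have /dinjectiveP pmono_inj := free_uniq free_monos.
rewrite map_monos map_inj_in_uniq ?enum_uniq // => r s; rewrite !mem_enum => Er Es.
by move/(pmono_inj _ _ (g_expvecs Er) (g_expvecs Es)); apply: g_inj.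
Qed.

Lemma map_monos_free : free (map f (monos m' d' p)).
Proof. exact: sub_free map_monos_uniq map_monos_sub free_monos. Qed.

End MonomialImage.

Lemma expvecs_le m d r i : r \in expvecs m d -> (r i <= d)%N.
Proof. by apply: leq_trans; rewrite (bigD1 i) //= leq_addr. Qed.

Section RaiseLast.

Variables (m d c j : nat).
Hypothesis djc : (d + j <= c)%N.

Definition raise_last (r : {ffun 'I_m.+1 -> 'I_d.+1}) : {ffun 'I_m.+1 -> 'I_c.+1} :=
  [ffun i => inord (r i + j * (i == ord_max))].

Lemma raise_lastE r i : r \in expvecs m.+1 d ->
  (raise_last r i : nat) = (r i + j * (i == ord_max))%N.
Proof.
move=> Er; rewrite ffunE inordK // ltnS (leq_trans _ djc) // leq_add ?expvecs_le //.
by case: (i == ord_max); rewrite ?muln1 ?muln0.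
Qed.

Lemma raise_last_max r : r \in expvecs m.+1 d -> (j <= raise_last r ord_max)%N.
Proof. by move=> Er; rewrite raise_lastE // eqxx muln1 leq_addl. Qed.

Lemma raise_last_expvecs r : r \in expvecs m.+1 d -> raise_last r \in expvecs m.+1 c.
Proof.
move=> Er; rewrite inE (eq_bigr _ (fun i _ => raise_lastE i Er)) big_split /=.
have -> : (\sum_(i < m.+1) j * (i == ord_max) = j)%N.
  by rewrite (bigD1 ord_max) //= eqxx muln1 big1 ?addn0 // => i /negPf->; rewrite muln0.
by rewrite (leq_trans _ djc) // leq_add2r.
Qed.

Lemma raise_last_inj : {in expvecs m.+1 d &, injective raise_last}.
Proof.
move=> r s Er Es /ffunP eq_rs; apply/ffunP => i.
by apply/val_inj/(@addIn (j * (i == ord_max))); rewrite -!raise_lastE // eq_rs.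
Qed.

Lemma pmono_raise_last (L : falgType rat) (p : nat -> L) :
  (forall x y : L, x * y = y * x) ->
  {in expvecs m.+1 d, forall r, pmono p (raise_last r) = p m.+1 ^+ j * pmono p r}.
Proof.
move=> mulC r Er; rewrite /pmono !big_ord_recr /= raise_lastE // eqxx muln1 exprD.
rewrite (eq_bigr (fun i : 'I_m => p i.+1 ^+ r (widen_ord (leqnSn m) i))) => [|i _].
  by rewrite mulrA [_ * p m.+1 ^+ j]mulC mulrA.
have /negPf not_max : widen_ord (leqnSn m) i != ord_max by rewrite -val_eqE /= neq_ltn ltn_ord.
by rewrite raise_lastE // not_max muln0 addn0.
Qed.

End RaiseLast.

Section ExtendZero.

Variables (m d : nat).

Definition extend_zero (r : {ffun 'I_m -> 'I_d.+1}) : {ffun 'I_m.+1 -> 'I_d.+1} :=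
  [ffun i => if unlift ord_max i is Some i' then r i' else ord0].

Lemma extend_zero_max r : extend_zero r ord_max = ord0.
Proof. by rewrite ffunE unlift_none. Qed.

Lemma extend_zero_widen r i : extend_zero r (widen_ord (leqnSn m) i) = r i.
Proof.
have -> : widen_ord (leqnSn m) i = lift ord_max i.
  by apply: val_inj; rewrite /= /bump leqNgt ltn_ord.
by rewrite ffunE liftK.
Qed.

Lemma extend_zero_expvecs r : r \in expvecs m d -> extend_zero r \in expvecs m.+1 d.
Proof.
rewrite inE => Er; rewrite inE big_ord_recr /= extend_zero_max addn0.
by rewrite (eq_bigr (fun i => r i : nat)) // => i _; rewrite extend_zero_widen.
Qed.

Lemma extend_zero_inj : injective extend_zero.
Proof.
by move=> r s /ffunP eq_rs; apply/ffunP => i; rewrite -!extend_zero_widen eq_rs.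
Qed.

Lemma pmono_extend_zero (L : falgType rat) (p : nat -> L) r :
  pmono p (extend_zero r) = pmono p r.
Proof.
rewrite /pmono big_ord_recr /= extend_zero_max mulr1.
by apply: eq_bigr => i _; rewrite extend_zero_widen.
Qed.

End ExtendZero.

Section TopClass.

Variables (L : falgType rat) (p : nat -> L) (a b : nat).
Hypothesis mulC : forall x y : L, x * y = y * x.

Local Notation X := (monos a.+1 b.+1 p).
Local Notation A := (monoSpan a.+1 b p).
Local Notation M := (monoSpan a b.+1 p).
Local Notation raise j := (@raise_last a b b.+1 j).

Let raise0 : (b + 0 <= b.+1)%N. Proof. by rewrite addn0. Qed.
Let raise1 : (b + 1 <= b.+1)%N. Proof. by rewrite addn1. Qed.

Let pmono_raise0 : {in expvecs a.+1 b, forall r, pmono p (raise 0 r) = id (pmono p r)}.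
Proof. by move=> r Er; rewrite (pmono_raise_last raise0) // mul1r. Qed.

Let pmono_raise1 :
  {in expvecs a.+1 b, forall r, pmono p (raise 1 r) = amull (p a.+1) (pmono p r)}.
Proof. by move=> r Er; rewrite (pmono_raise_last raise1) // lfunE. Qed.

Let pmono_extend : {in expvecs a b.+1, forall r, pmono p (extend_zero r) = id (pmono p r)}.
Proof. by move=> r _; rewrite pmono_extend_zero. Qed.

Let mulSp_top_span : mulSp (p a.+1) A = <<map (amull (p a.+1)) (monos a.+1 b p)>>%VS.
Proof. exact: limg_span. Qed.

Let lower_sub : {subset monos a.+1 b p <= X}.
Proof.
by move=> x Ax; apply: (map_monos_sub (raise_last_expvecs raise0) pmono_raise0); rewrite map_id.
Qed.

Let top_sub : {subset map (amull (p a.+1)) (monos a.+1 b p) <= X}.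
Proof. exact: (map_monos_sub (raise_last_expvecs raise1) pmono_raise1). Qed.

Let notop_sub : {subset monos a b.+1 p <= X}.
Proof.
by move=> x Mx; apply: (map_monos_sub (@extend_zero_expvecs a b.+1) pmono_extend); rewrite map_id.
Qed.

Lemma monoSpan_lower_sub : (A <= <<X>>)%VS.
Proof. by apply/span_subvP => x /lower_sub; apply: memv_span. Qed.

Lemma mulSp_top_sub : (mulSp (p a.+1) A <= <<X>>)%VS.
Proof. by rewrite mulSp_top_span; apply/span_subvP => x /top_sub; apply: memv_span. Qed.

Lemma monoSpan_notop_sub : (M <= <<X>>)%VS.
Proof. by apply/span_subvP => x /notop_sub; apply: memv_span. Qed.

Hypothesis free_X : free X.

Lemma free_monos_lower : free (monos a.+1 b p).
Proof.
rewrite -[monos _ _ _]map_id.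
exact: map_monos_free (raise_last_inj raise0) (raise_last_expvecs raise0) pmono_raise0 free_X.
Qed.

Lemma free_monos_notop : free (monos a b.+1 p).
Proof.
rewrite -[monos _ _ _]map_id.
exact: map_monos_free (in2W (@extend_zero_inj a b.+1)) (@extend_zero_expvecs a b.+1) pmono_extend free_X.
Qed.

Let free_mulSp_top : free (map (amull (p a.+1)) (monos a.+1 b p)).
Proof. exact: map_monos_free (raise_last_inj raise1) (raise_last_expvecs raise1) pmono_raise1 free_X. Qed.

Lemma monoSpan_lower_cap_ker : (A :&: lker (amull (p a.+1)) = 0)%VS.
Proof.
apply/eqP; rewrite -dimv_eq0 -(eqn_add2r (\dim (mulSp (p a.+1) A))) limg_ker_dim add0n.
by rewrite mulSp_top_span (eqP free_mulSp_top) size_map (eqP free_monos_lower).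
Qed.

Lemma monoSpan_notop_cap : (M :&: mulSp (p a.+1) A = 0)%VS.
Proof.
rewrite mulSp_top_span; apply: (sub_free_span_cap0 (X := X)) => //; last first.
  by move=> x; rewrite mem_cat => /orP[/notop_sub | /top_sub].
rewrite cat_uniq -{1}[monos a b.+1 p]map_id.
rewrite (map_monos_uniq (in2W (@extend_zero_inj a b.+1)) (@extend_zero_expvecs a b.+1) pmono_extend free_X).
rewrite (map_monos_uniq (raise_last_inj raise1) (raise_last_expvecs raise1) pmono_raise1 free_X) andbT /=.
apply/hasPn => x; rewrite (map_monos pmono_raise1) => /mapP[r]; rewrite mem_enum => Er ->.
rewrite -[monos a b.+1 p]map_id (map_monos pmono_extend).
apply/mapP => -[s]; rewrite mem_enum => Es.
have /dinjectiveP pmono_inj := free_uniq free_X.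
move/pmono_inj => /(_ (raise_last_expvecs raise1 Er) (extend_zero_expvecs Es)) eq_rs.
by have := raise_last_max raise1 Er; rewrite eq_rs extend_zero_max.
Qed.

End TopClass.

Section Eigenspaces.

Variables (L : falgType rat) (rho : 'End(L)).

Lemma mem_eigP x : (x \in eigP rho) = (rho x == x).
Proof. by rewrite memv_ker add_lfunE opp_lfunE id_lfunE subr_eq0. Qed.

Lemma mem_eigN x : (x \in eigN rho) = (rho x == - x).
Proof. by rewrite memv_ker add_lfunE id_lfunE addr_eq0. Qed.

Lemma eigP_cap_eigN : (eigP rho :&: eigN rho = 0)%VS.
Proof.
apply/eqP; rewrite -subv0; apply/subvP => x /memv_capP[].
rewrite mem_eigP mem_eigN memv0 => /eqP-> /eqP x_opp.
have /eqP : x *+ 2 = 0 by rewrite mulr2n {1}x_opp addNr.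
by rewrite -scaler_nat scaler_eq0 pnatr_eq0.
Qed.

Lemma dim_eigP_eigN : (\dim (eigP rho) + \dim (eigN rho) <= \dim (fullv : {vspace L}))%N.
Proof. by rewrite -dimv_sum_cap eigP_cap_eigN dimv0 addn0 dimvS ?subvf. Qed.

Hypothesis rhoM : forall x y, rho (x * y) = rho x * rho y.

Lemma mulSp_eigN g U : rho g = - g -> (U <= eigP rho)%VS -> (mulSp g U <= eigN rho)%VS.
Proof.
move=> rho_g /subvP sUP; apply/subvP => _ /memv_imgP[u /sUP Pu ->].
by move: Pu; rewrite lfunE /= mem_eigP mem_eigN rhoM rho_g => /eqP->; rewrite mulNr.
Qed.

End Eigenspaces.

Section SquareRootOfTopClass.

Variables (L : falgType rat) (p : nat -> L) (e : L) (a b : nat).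
Hypothesis mulC : forall x y : L, x * y = y * x.
Hypothesis e2 : e ^+ 2 = p a.+1.
Hypothesis free_p : free (monos a.+1 b.+1 p).

Local Notation A := (monoSpan a.+1 b p).

Lemma mul_sqrt_top x : e * (e * x) = p a.+1 * x.
Proof. by rewrite mulrA -expr2 e2. Qed.

Lemma monoSpan_lower_cap_ker_sqrt : (A :&: lker (amull e) = 0)%VS.
Proof.
apply/eqP; rewrite -subv0 -(monoSpan_lower_cap_ker mulC free_p).
apply/subvP => x /memv_capP[Ax]; rewrite !memv_ker !lfunE /= => /eqP ex0.
by rewrite memv_cap Ax memv_ker lfunE /= -mul_sqrt_top ex0 mulr0.
Qed.

Lemma dim_mulSp_sqrt_top : \dim (mulSp e A) = \dim A.
Proof. exact: limg_dim_eq monoSpan_lower_cap_ker_sqrt. Qed.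

Lemma mul_sqrt_top_inj : {in A &, injective (fun x => e * x)}.
Proof.
move=> x y Ax Ay /= /eqP; rewrite -subr_eq0 -mulrBr => /eqP exy; apply/eqP.
have : x - y \in (A :&: lker (amull e))%VS by rewrite memv_cap rpredB // memv_ker lfunE /= exy.
by rewrite monoSpan_lower_cap_ker_sqrt memv0 subr_eq0.
Qed.

End SquareRootOfTopClass.

Section EulerClasses.

Variables (L : falgType rat) (rho : 'End(L)) (p q : nat -> L) (e f : L) (a b : nat).
Hypothesis mulC : forall x y : L, x * y = y * x.
Hypothesis rhoM : forall x y, rho (x * y) = rho x * rho y.
Hypotheses (rho_e : rho e = - e) (rho_f : rho f = - f).
Hypotheses (e2 : e ^+ 2 = p a.+1) (f2 : f ^+ 2 = q b.+1) (ef : e * f = 0).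
Hypothesis basis_p : basis_of (eigP rho) (monos a.+1 b.+1 p).
Hypothesis basis_q : basis_of (eigP rho) (monos b.+1 a.+1 q).
Hypothesis dim_eigN : (\dim (eigN rho) <= \dim (eigP rho))%N.

Local Notation H := (eigP rho).
Local Notation N := (eigN rho).
Local Notation A := (monoSpan a.+1 b p).
Local Notation B := (monoSpan b.+1 a q).

Let span_p : <<monos a.+1 b.+1 p>>%VS = H. Proof. exact: span_basis basis_p. Qed.
Let span_q : <<monos b.+1 a.+1 q>>%VS = H. Proof. exact: span_basis basis_q. Qed.
Let free_p : free (monos a.+1 b.+1 p). Proof. exact: basis_free basis_p. Qed.
Let free_q : free (monos b.+1 a.+1 q). Proof. exact: basis_free basis_q. Qed.

Let sub_A : (A <= H)%VS. Proof. by rewrite -span_p monoSpan_lower_sub. Qed.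
Let sub_B : (B <= H)%VS. Proof. by rewrite -span_q monoSpan_lower_sub. Qed.
Let dim_e_A : \dim (mulSp e A) = \dim A. Proof. exact: dim_mulSp_sqrt_top e2 free_p. Qed.
Let dim_f_B : \dim (mulSp f B) = \dim B. Proof. exact: dim_mulSp_sqrt_top f2 free_q. Qed.

Lemma dim_lower_add : (\dim A + \dim B = \dim H)%N.
Proof.
by rewrite -span_p !dim_monoSpan ?bin_splitS // free_monos_lower.
Qed.

Lemma mulSp_e_cap_f : (mulSp e A :&: mulSp f B = 0)%VS.
Proof.
apply/eqP; rewrite -subv0; apply/subvP => _ /memv_capP[/memv_imgP[u Au ->]].
rewrite memv0 lfunE /= => /memv_imgP[v _]; rewrite lfunE /= => euv.
have : u \in (A :&: lker (amull (p a.+1)))%VS.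
  by rewrite memv_cap Au memv_ker lfunE /= -(mul_sqrt_top e2) euv mulrA ef mul0r.
by rewrite (monoSpan_lower_cap_ker mulC free_p) memv0 => /eqP->; rewrite mulr0.
Qed.

Lemma mulSp_e_add_f : (mulSp e A + mulSp f B)%VS = N.
Proof.
apply/eqP; rewrite eqEdim subv_add !mulSp_eigN //=.
by rewrite (dimv_disjoint_sum mulSp_e_cap_f) dim_e_A dim_f_B dim_lower_add.
Qed.

Lemma eigP_cap_ker_e : (H :&: lker (amull e))%VS = mulSp (q b.+1) B.
Proof.
apply/esym/eqP; rewrite eqEdim subv_cap -{1}span_q (mulSp_top_sub q b a mulC) /=.
apply/andP; split.
  apply/subvP => _ /memv_imgP[v _ ->]; rewrite memv_ker !lfunE /=.
  by rewrite -f2 expr2 !mulrA ef !mul0r.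
rewrite -(leq_add2r (\dim (mulSp e H))) limg_ker_dim -dim_lower_add.
rewrite (limg_dim_eq (monoSpan_lower_cap_ker mulC free_q)) addnC leq_add2l.
by rewrite -dim_e_A; apply/dimvS/limgS.
Qed.

Lemma mulSp_e_eigP : mulSp e H = mulSp e A.
Proof.
apply/esym/eqP; rewrite eqEdim limgS //= dim_e_A.
rewrite -(leq_add2l (\dim (H :&: lker (amull e)))) limg_ker_dim eigP_cap_ker_e.
by rewrite (limg_dim_eq (monoSpan_lower_cap_ker mulC free_q)) -dim_lower_add addnC leqnn.
Qed.

Lemma mulSp_e_monoSpan_notop : mulSp e (monoSpan b a.+1 q) = mulSp e H.
Proof.
have sub_M : (monoSpan b a.+1 q <= H)%VS by rewrite -span_q monoSpan_notop_sub.
have M_cap_ker : (monoSpan b a.+1 q :&: lker (amull e) = 0)%VS.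
  apply/eqP; rewrite -subv0 -(monoSpan_notop_cap mulC free_q); apply/subvP => x.
  by case/memv_capP=> Mx kx; rewrite memv_cap Mx -eigP_cap_ker_e memv_cap kx (subvP sub_M).
apply/eqP; rewrite eqEdim (limgS _ sub_M) /= mulSp_e_eigP dim_e_A (limg_dim_eq M_cap_ker).
rewrite (dim_monoSpan (free_monos_lower mulC free_p)).
by rewrite (dim_monoSpan (free_monos_notop free_q)) addnC bin_sym leqnn.
Qed.

Lemma Euler_classes_decomposition :
  [/\ {in A &, injective (fun x => e * x)},
      directv (mulSp e A + mulSp f B), (mulSp e A + mulSp f B)%VS = N,
      (H :&: lker (amull e))%VS = mulSp (q b.+1) B
    & mulSp e A = mulSp e (monoSpan b a.+1 q) /\ mulSp e (monoSpan b a.+1 q) = mulSp e H].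
Proof.
split; [exact: mul_sqrt_top_inj e2 free_p | exact/directv_addP/mulSp_e_cap_f |
  exact: mulSp_e_add_f | exact: eigP_cap_ker_e | ].
by rewrite mulSp_e_monoSpan_notop mulSp_e_eigP.
Qed.

End EulerClasses.

Theorem mainTheorem16
  (n k : nat) (hk1 : (1 <= k)%N) (hkn : (k <= n - 1)%N)
  (L : falgType rat)                     (* H^*(~G_{2k}(R^{2n})) *)
  (hcomm : forall x y : L, x * y = y * x)
  (rho : 'End(L))                        (* rho^* *)
  (hrhoM : forall x y : L, rho (x * y) = rho x * rho y)
  (hrho1 : rho 1 = 1)
  (hrho2 : forall x : L, rho (rho x) = x)
  (p pb : nat -> L)                      (* p_i, bar p_i *)
  (e eb : L)                             (* e, bar e *)
  (hrhoe : rho e = - e) (hrhoeb : rho eb = - eb)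
  (hpont : (1 + \sum_(1 <= i < k.+1) p i) * (1 + \sum_(1 <= i < (n - k)%N.+1) pb i) = 1)
  (he2 : e ^+ 2 = p k) (heb2 : eb ^+ 2 = pb (n - k)%N) (hee : e * eb = 0)
  (hbasis_p : basis_of (eigP rho) (monos k (n - k)%N p))
  (hbasis_pb : basis_of (eigP rho) (monos (n - k)%N k pb))
  (hdim : \dim (fullv : {vspace L}) = (2 * 'C(n, k))%N) :
  let H := eigP rho in
  let A := monoSpan k (n - k - 1)%N p in
  let B := monoSpan (n - k)%N (k - 1)%N pb in
  (* (1) *)
  ({in A &, injective (fun a => e * a)} /\ {in B &, injective (fun b => eb * b)}) /\
  (* (2) *)
  (directv (mulSp e A + mulSp eb B) /\ (mulSp e A + mulSp eb B)%VS = eigN rho) /\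
  (* (3) *)
  ((mulSp e H :&: mulSp eb H)%VS = 0%VS /\ (mulSp e H + mulSp eb H)%VS = eigN rho) /\
  (* (4) *)
  ((H :&: lker (amull e))%VS = mulSp (pb (n - k)%N) B /\
   (H :&: lker (amull eb))%VS = mulSp (p k) A) /\
  (* (5) *)
  (mulSp e A = mulSp e (monoSpan (n - k - 1)%N k pb) /\ mulSp e (monoSpan (n - k - 1)%N k pb) = mulSp e H /\
   mulSp eb B = mulSp eb (monoSpan (k - 1)%N (n - k)%N p) /\ mulSp eb (monoSpan (k - 1)%N (n - k)%N p) = mulSp eb H).
Proof.
clear hpont hrho1 hrho2.
case: k hk1 hkn he2 heb2 hbasis_p hbasis_pb hdim => // a _ hkn he2 heb2 hbasis_p hbasis_pb hdim.
have [b nk] : exists b, (n - a.+1)%N = b.+1 by exists (n - a.+2)%N; lia.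
rewrite nk in heb2 hbasis_p hbasis_pb *; rewrite (_ : n = a.+1 + b.+1)%N in hdim; last by lia.
rewrite !subn1 /=.
have dimN : (\dim (eigN rho) <= \dim (eigP rho))%N.
  rewrite -(leq_add2l (\dim (eigP rho))) addnn -mul2n {2}(dim_basis_monos hbasis_p) -hdim.
  exact: dim_eigP_eigN.
have hbe : eb * e = 0 by rewrite hcomm.
have [inj_e dir_e sum_e ker_e img_e] :=
  Euler_classes_decomposition hcomm hrhoM hrhoe hrhoeb he2 heb2 hee hbasis_p hbasis_pb dimN.
have [inj_eb _ _ ker_eb img_eb] :=
  Euler_classes_decomposition hcomm hrhoM hrhoeb hrhoe heb2 he2 hbe hbasis_pb hbasis_p dimN.
have [eA_eM eM_eH] := img_e; have [ebB_ebM ebM_ebH] := img_eb.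
do !split => //; rewrite -eM_eH -eA_eM -ebM_ebH -ebB_ebM //.
exact/directv_addP.
Qed.
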